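(* Let $0<\gamma<\frac n2$ and $1\leq k<\frac n2-\gamma$, let $a_0=\frac{n-k-2}{2}$, and define $$\Theta(a,b)=4^\gamma\frac{\Gamma\big(\frac{1+\gamma}{2}+\frac{a+bi}{2}\big)}{\Gamma\big(\frac{1-\gamma}{2}+\frac{a+bi}{2}\big)}\,\frac{\Gamma\big(\frac{1+\gamma}{2}+\frac{a-bi}{2}\big)}{\Gamma\big(\frac{1-\gamma}{2}+\frac{a-bi}{2}\big)}.$$ Then: (i) $\frac{\partial\Theta}{\partial a}(a,\beta i)>0$ for all $a\geq a_0$ and $0<\beta\leq\frac k2$; (ii) $\frac{\partial\Theta}{\partial\beta}(a,\beta i)<0$ for all $a\geq a_0$ and $0<\beta\leq\frac k2$; (iii) $\frac{\partial\Theta}{\partial b}(a,b)>0$ for all $a\geq a_0$ and real $b>0$.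
   Context: For $a\geq a_0$ and $b$ either purely imaginary with $|b|\leq\frac k2$ or real, $\Theta(a,b)$ is a positive real number. *)

From Stdlib Require Import Reals Factorial.
From Coquelicot Require Import Coquelicot.
Open Scope R_scope.

Definition cpow_nat (n : nat) (z : C) : C :=
  (exp (Re z * ln (INR n)) * cos (Im z * ln (INR n)),
   exp (Re z * ln (INR n)) * sin (Im z * ln (INR n))).

Fixpoint poch_prod (z : C) (n : nat) : C :=
  match n with
  | O => z
  | S m => Cmult (poch_prod z m) (Cplus z (RtoC (INR (S m))))
  end.

Definition Gamma_seq (z : C) (n : nat) : C :=
  Cdiv (Cmult (cpow_nat n z) (RtoC (INR (Factorial.fact n)))) (poch_prod z n).

(* Euler's Gamma function via Gauss' limit formula
   Gamma z = lim_{n -> oo} n^z n! / (z (z+1) ... (z+n)),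
   valid for z not in {0,-1,-2,...}; real and imaginary parts taken as limits. *)
Definition CGamma (z : C) : C :=
  (real (Lim_seq (fun n => Re (Gamma_seq z n))),
   real (Lim_seq (fun n => Im (Gamma_seq z n)))).

Definition Theta (gam a : R) (b : C) : C :=
  let zp := Cplus (RtoC a) (Cmult Ci b) in
  let zm := Cminus (RtoC a) (Cmult Ci b) in
  Cmult (RtoC (Rpower 4 gam))
   (Cmult
     (Cdiv (CGamma (Cplus (RtoC ((1 + gam) / 2)) (Cdiv zp (RtoC 2))))
           (CGamma (Cplus (RtoC ((1 - gam) / 2)) (Cdiv zp (RtoC 2)))))
     (Cdiv (CGamma (Cplus (RtoC ((1 + gam) / 2)) (Cdiv zm (RtoC 2))))
           (CGamma (Cplus (RtoC ((1 - gam) / 2)) (Cdiv zm (RtoC 2)))))).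

From Stdlib Require Import Reals Lra Lia Ranalysis5 Factorial.
From Coquelicot Require Import Coquelicot.
Open Scope R_scope.

(* At z = x + iy with x > 0, Gauss' product term n^z n! / (z (z+1) ... (z+n)) has
   log-modulus x ln n + ln n! - 1/2 sum_(j<=n) ln ((x+j)^2 + y^2) and argument
   y ln n - sum_(j<=n) atan (y / (x+j)).  Both have O(1/n^2) increments, so
   Gamma(x + iy) = exp (L x y) e^(i A x y) with L and A their limits.  When b = i beta or b
   is real the arguments cancel in Theta, which becomes 4^gamma exp of a sum of values of
   D x y = L (x + gamma) y - L x y.  The derivatives of the Gauss approximants of D are
   partial sums of uniformly convergent series, so D can be differentiated term by term:
   d/dx D x 0 = psi (x + gamma) - psi x = sum_j gamma / ((x+j) (x+gamma+j)) is positive and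
   decreasing in x, and d/dy D x y = sum_j (y / ((x+j)^2 + y^2) - y / ((x+gamma+j)^2 + y^2))
   is positive for y > 0.  The hypotheses on n and k keep the real parts
   (1 - gamma)/2 + (a -+ beta)/2 of all the Gamma arguments positive. *)

(** * Summable increments and termwise differentiation *)

Lemma inv_sq_le_telescope (N : R) : 1 <= N -> / N ^ 2 <= 2 * (/ N - / (N + 1)).
Proof.
intros HN.
replace (2 * (/ N - / (N + 1))) with (2 / (N * (N + 1))) by (field; lra).
apply Rmult_le_reg_r with (N ^ 2 * (N + 1)); [nra|].
field_simplify; nra.
Qed.

Lemma increments_tail_bound (s : nat -> R) (C : R) :
  (forall k, Rabs (s (S k) - s k) <= C / (INR k + 1) ^ 2) ->
  forall k m, (k <= m)%nat -> Rabs (s m - s k) <= 2 * C / (INR k + 1).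
Proof.
intros Hs.
assert (HC : 0 <= C).
{ specialize (Hs O); rewrite INR_0 in Hs. pose proof (Rabs_pos (s 1%nat - s 0%nat)); lra. }
assert (Htel : forall k m,
          Rabs (s (m + k)%nat - s k) <= 2 * C * (/ (INR k + 1) - / (INR (m + k) + 1))).
{ intros k m; induction m as [|m IH].
  - rewrite Nat.add_0_l, Rminus_diag, Rabs_R0; lra.
  - rewrite Nat.add_succ_l, S_INR.
    pose proof (pos_INR (m + k)).
    assert (Hstep : C / (INR (m + k) + 1) ^ 2
                    <= 2 * C * (/ (INR (m + k) + 1) - / (INR (m + k) + 1 + 1))).
    { rewrite (Rmult_comm 2 C), Rmult_assoc; unfold Rdiv; apply Rmult_le_compat_l; [lra|].
      apply inv_sq_le_telescope; lra. }
    replace (s (S (m + k)) - s k)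
      with ((s (S (m + k)) - s (m + k)%nat) + (s (m + k)%nat - s k)) by ring.
    pose proof (Hs (m + k)%nat).
    eapply Rle_trans; [apply Rabs_triang|]. lra. }
intros k m Hkm; replace m with ((m - k) + k)%nat by lia.
eapply Rle_trans; [apply Htel|].
pose proof (pos_INR (m - k + k)).
assert (0 < / (INR (m - k + k) + 1)) by (apply Rinv_0_lt_compat; lra).
unfold Rdiv; nra.
Qed.

Lemma is_lim_seq_of_summable_increments (s : nat -> R) (C : R) :
  (forall k, Rabs (s (S k) - s k) <= C / (INR k + 1) ^ 2) ->
  is_lim_seq s (real (Lim_seq s)) /\
  forall k, Rabs (real (Lim_seq s) - s k) <= 2 * C / (INR k + 1).
Proof.
intros Hs.
pose proof (increments_tail_bound s C Hs) as Htail.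
assert (Hlim : is_lim_seq s (real (Lim_seq s))).
{ assert (Hcv : ex_finite_lim_seq s).
  { apply ex_lim_seq_cauchy_corr. intros eps.
    destruct (INR_archimed eps (4 * C) (cond_pos eps)) as [N HN].
    exists N; intros n m Hn Hm.
    replace (s n - s m) with ((s n - s N) - (s m - s N)) by ring.
    eapply Rle_lt_trans; [apply Rabs_triang|]. rewrite Rabs_Ropp.
    pose proof (Htail N n Hn); pose proof (Htail N m Hm); pose proof (pos_INR N).
    assert (2 * C / (INR N + 1) * 2 < eps).
    { apply Rmult_lt_reg_r with (INR N + 1); [lra|].
      replace (2 * C / (INR N + 1) * 2 * (INR N + 1)) with (4 * C) by (field; lra).
      pose proof (cond_pos eps); nra. }
    lra. }
  destruct Hcv as [l Hl]. rewrite (is_lim_seq_unique _ _ Hl). exact Hl. }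
split; [exact Hlim|]. intros k.
apply (is_lim_seq_le (fun m => Rabs (s (m + k)%nat - s k)) (fun _ => 2 * C / (INR k + 1))
        (Rabs (real (Lim_seq s) - s k)) (2 * C / (INR k + 1))).
- intros m; apply Htail; lia.
- apply (is_lim_seq_abs _ (Finite (real (Lim_seq s) - s k))).
  apply is_lim_seq_minus'; [|apply is_lim_seq_const].
  now apply (is_lim_seq_incr_n s k).
- apply is_lim_seq_const.
Qed.

Lemma Series_tail_bound (a : nat -> R) (C : R) :
  (forall k, Rabs (a (S k)) <= C / (INR k + 1) ^ 2) ->
  ex_series a /\ forall k, Rabs (Series a - sum_f_R0 a k) <= 2 * C / (INR k + 1).
Proof.
intros Ha.
assert (Hsum : forall k, Rabs (sum_f_R0 a (S k) - sum_f_R0 a k) <= C / (INR k + 1) ^ 2).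
{ intros k; simpl sum_f_R0; replace (sum_f_R0 a k + a (S k) - sum_f_R0 a k) with (a (S k)) by ring.
  apply Ha. }
destruct (is_lim_seq_of_summable_increments _ _ Hsum) as [Hlim Htail].
assert (E : Series a = real (Lim_seq (sum_f_R0 a))).
{ unfold Series; f_equal; apply Lim_seq_ext; intros; apply sum_n_Reals. }
rewrite E; split; [|exact Htail].
exists (real (Lim_seq (sum_f_R0 a))).
apply (is_lim_seq_ext _ _ _ (fun n => eq_sym (sum_n_Reals a n)) Hlim).
Qed.

Lemma Series_ge_head (a : nat -> R) : ex_series a -> (forall j, 0 <= a j) -> a O <= Series a.
Proof.
intros Ha Hpos.
assert (Hpart : forall n, a O <= sum_n a n).
{ intros n; rewrite sum_n_Reals; induction n as [|n IH]; simpl; [lra|].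
  pose proof (Hpos (S n)); lra. }
exact (is_lim_seq_le _ _ (a O) (Series a) Hpart (is_lim_seq_const _) (Series_correct a Ha)).
Qed.

Lemma Series_pos (a : nat -> R) :
  ex_series a -> (forall j, 0 <= a j) -> 0 < a O -> 0 < Series a.
Proof. intros Ha Hpos H0; pose proof (Series_ge_head a Ha Hpos); lra. Qed.

Lemma Series_lt (a b : nat -> R) :
  ex_series a -> ex_series b -> (forall j, a j <= b j) -> a O < b O -> Series a < Series b.
Proof.
intros Ha Hb Hle H0.
assert (Hba : ex_series (fun j => b j - a j)) by exact (ex_series_minus b a Hb Ha).
assert (Hhead : b O - a O <= Series (fun j => b j - a j)).
{ apply (Series_ge_head _ Hba); intros j; pose proof (Hle j); lra. }
rewrite Series_minus in Hhead by assumption. simpl in Hhead. lra.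
Qed.

Lemma is_derive_sum_f_R0 (h : nat -> R -> R) (dh : nat -> R) (x : R) (n : nat) :
  (forall j, (j <= n)%nat -> is_derive (h j) x (dh j)) ->
  is_derive (fun y => sum_f_R0 (fun j => h j y) n) x (sum_f_R0 dh n).
Proof.
intros Hh; rewrite <- sum_n_Reals.
apply (is_derive_ext (fun y => sum_n (fun j => h j y) n)).
- intros y; apply sum_n_Reals.
- exact (is_derive_sum_n h n x dh Hh).
Qed.

Lemma CVU_of_tail_bound (fn : nat -> R -> R) (f : R -> R) (x : R) (r : posreal) (C : R) :
  (forall n y, Boule x r y -> Rabs (f y - fn n y) <= C / (INR n + 1)) -> CVU fn f x r.
Proof.
intros Hb eps Heps.
destruct (INR_archimed eps C Heps) as [N HN].
exists N; intros n y Hn Hy.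
eapply Rle_lt_trans; [exact (Hb n y Hy)|].
assert (INR N <= INR n) by (apply le_INR; exact Hn).
pose proof (pos_INR N).
apply Rmult_lt_reg_r with (INR n + 1); [lra|].
unfold Rdiv; rewrite Rmult_assoc, Rinv_l by lra. nra.
Qed.

Lemma is_derive_lim_termwise (f : nat -> R -> R) (F : R -> R) (t : nat -> R -> R)
    (x : R) (r : posreal) (C : R) :
  (forall n y, Rabs (y - x) < r -> is_derive (f n) y (sum_f_R0 (fun j => t j y) n)) ->
  (forall y, Rabs (y - x) < r -> is_lim_seq (fun n => f n y) (F y)) ->
  (forall j y, Rabs (y - x) < r -> continuous (t j) y) ->
  (forall j y, Rabs (y - x) < r -> Rabs (t (S j) y) <= C / (INR j + 1) ^ 2) ->
  is_derive F x (Series (fun j => t j x)).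
Proof.
intros Hd Hlim Hcont Hbound.
assert (Hcvu : CVU (fun n y => sum_f_R0 (fun j => t j y) n) (fun y => Series (fun j => t j y)) x r).
{ apply CVU_of_tail_bound with (2 * C); intros n y Hy.
  exact (proj2 (Series_tail_bound (fun j => t j y) C (fun k => Hbound k y Hy)) n). }
apply is_derive_Reals.
apply (derivable_pt_lim_CVU f (fun n y => sum_f_R0 (fun j => t j y) n) F
         (fun y => Series (fun j => t j y)) x x r).
- unfold Boule; rewrite Rminus_diag, Rabs_R0; apply cond_pos.
- intros y n Hy; apply is_derive_Reals, Hd, Hy.
- intros y Hy; apply is_lim_seq_Reals, Hlim, Hy.
- exact Hcvu.
- apply (CVU_continuity _ _ x r Hcvu); intros n y Hy.
  apply continuity_pt_finite_SF; intros j _.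
  apply continuity_pt_filterlim, Hcont, Hy.
Qed.

Lemma ln_sub_bounds (p q : R) : 0 < p -> 0 < q -> (q - p) / q <= ln q - ln p <= (q - p) / p.
Proof.
intros Hp Hq.
assert (Hln : forall u, 0 < u -> ln u <= u - 1).
{ intros u Hu; pose proof (exp_ineq1_le (ln u)); rewrite exp_ln in *; lra. }
pose proof (Hln (p / q) (Rdiv_lt_0_compat _ _ Hp Hq)) as Hpq.
pose proof (Hln (q / p) (Rdiv_lt_0_compat _ _ Hq Hp)) as Hqp.
rewrite ln_div in Hpq, Hqp by lra.
replace ((q - p) / q) with (1 - p / q) by (field; lra).
replace ((q - p) / p) with (q / p - 1) by (field; lra).
lra.
Qed.

Lemma atan_sub_id_bound (t : R) : Rabs (atan t - t) <= Rabs t ^ 3.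
Proof.
destruct (MVT_abs (fun u => atan u - u) (fun u => / (1 + u ^ 2) - 1) 0 t) as [c [Hc Hct]].
{ intros c _; apply derivable_pt_lim_minus;
    [apply derivable_pt_lim_atan|apply derivable_pt_lim_id]. }
rewrite atan_0, Rminus_0_r, !Rminus_0_r in Hc. rewrite Hc.
assert (Hc2 : c ^ 2 <= t ^ 2).
{ destruct (Rle_dec 0 t);
    [rewrite Rmin_left, Rmax_right in Hct|rewrite Rmin_right, Rmax_left in Hct];
    try lra; nra. }
assert (Hd : Rabs (/ (1 + c ^ 2) - 1) <= c ^ 2).
{ replace (/ (1 + c ^ 2) - 1) with (- (c ^ 2 / (1 + c ^ 2))) by (field; nra).
  rewrite Rabs_Ropp, Rabs_pos_eq by (apply Rdiv_le_0_compat; nra).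
  apply Rmult_le_reg_r with (1 + c ^ 2); [nra|]. field_simplify; nra. }
replace (Rabs t ^ 3) with (t ^ 2 * Rabs t) by (rewrite <- (pow2_abs t); ring).
apply Rmult_le_compat_r; [apply Rabs_pos|lra].
Qed.

Lemma inv_sub_inv_bound (g u N : R) : 0 < g -> 1 <= N <= u -> / u - / (u + g) <= g / N ^ 2.
Proof.
intros Hg HN.
replace (/ u - / (u + g)) with (g / (u * (u + g))) by (field; lra).
apply Rmult_le_compat_l; [lra|]. apply Rinv_le_contravar; nra.
Qed.

Lemma inv_sub_inv_pos (g u : R) : 0 < g -> 0 < u -> 0 < / u - / (u + g).
Proof. intros Hg Hu; apply Rlt_0_minus, Rinv_lt_contravar; nra. Qed.

Lemma inv_sub_inv_decreasing (g u v : R) : 0 < g -> 0 < u -> u < v ->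
  / v - / (v + g) < / u - / (u + g).
Proof.
intros Hg Hu Huv.
replace (/ u - / (u + g)) with (g * / (u * (u + g))) by (field; lra).
replace (/ v - / (v + g)) with (g * / (v * (v + g))) by (field; lra).
assert (Huu : 0 < u * (u + g)) by nra.
assert (Hlt : u * (u + g) < v * (v + g)) by nra.
apply Rmult_lt_compat_l; [exact Hg|]. apply Rinv_lt_contravar; [|exact Hlt].
apply Rmult_lt_0_compat; [exact Huu|lra].
Qed.

Lemma ratio_sub_ratio_bound (g y Y u N : R) : 0 < g -> 1 <= N <= u -> Rabs y <= Y ->
  Rabs (y / (u ^ 2 + y ^ 2) - y / ((u + g) ^ 2 + y ^ 2)) <= 2 * Y * g / N ^ 2.
Proof.
intros Hg HN HY.
set (D1 := u ^ 2 + y ^ 2); set (D2 := (u + g) ^ 2 + y ^ 2).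
assert (HD1 : N ^ 2 <= D1) by (unfold D1; nra).
assert (HD2 : u + g <= D2) by (unfold D2; nra).
replace (y / D1 - y / D2) with (y * (g * (2 * u + g) / (D1 * D2)))
  by (unfold D1, D2; field; split; nra).
rewrite Rabs_mult, (Rabs_pos_eq (g * _ / _)) by (apply Rdiv_le_0_compat; nra).
apply Rle_trans with (Y * (g * (2 * u + g) / (D1 * D2))).
{ apply Rmult_le_compat_r; [apply Rdiv_le_0_compat|]; nra. }
replace (2 * Y * g / N ^ 2) with (Y * (2 * g / N ^ 2)) by (field; lra).
apply Rmult_le_compat_l; [pose proof (Rabs_pos y); lra|].
unfold Rdiv; apply Rle_trans with (g * (2 * u + g) * / (N ^ 2 * (u + g))).
- apply Rmult_le_compat_l; [nra|]. apply Rinv_le_contravar; nra.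
- replace (g * (2 * u + g) * / (N ^ 2 * (u + g))) with (g * / N ^ 2 * ((2 * u + g) / (u + g)))
    by (field; nra).
  replace (2 * g * / N ^ 2) with (g * / N ^ 2 * 2) by ring.
  apply Rmult_le_compat_l; [apply Rmult_le_pos; [lra|apply Rlt_le, Rinv_0_lt_compat; nra]|].
  apply Rmult_le_reg_r with (u + g); [lra|]. unfold Rdiv; rewrite Rmult_assoc, Rinv_l; nra.
Qed.

Lemma ratio_sub_ratio_pos (g y u : R) : 0 < g -> 0 < y -> 0 < u ->
  0 < y / (u ^ 2 + y ^ 2) - y / ((u + g) ^ 2 + y ^ 2).
Proof.
intros Hg Hy Hu; apply Rlt_0_minus, Rmult_lt_compat_l; [exact Hy|].
assert (H1 : 0 < u ^ 2 + y ^ 2) by nra.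
assert (H12 : u ^ 2 + y ^ 2 < (u + g) ^ 2 + y ^ 2) by nra.
apply Rinv_lt_contravar; [apply Rmult_lt_0_compat|]; lra.
Qed.

(** * Gauss' product in polar form *)

Definition gauss_lnabs (x y : R) (n : nat) : R :=
  x * ln (INR n) + ln (INR (fact n)) - / 2 * sum_f_R0 (fun j => ln ((x + INR j) ^ 2 + y ^ 2)) n.

Definition gauss_arg (x y : R) (n : nat) : R :=
  y * ln (INR n) - sum_f_R0 (fun j => atan (y / (x + INR j))) n.

Definition lnabsGamma (x y : R) : R := real (Lim_seq (gauss_lnabs x y)).

Definition argGamma (x y : R) : R := real (Lim_seq (gauss_arg x y)).

Lemma gauss_lnabs_succ (x y : R) (n : nat) :
  gauss_lnabs x y (S n) - gauss_lnabs x y n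
  = x * (ln (INR (S n)) - ln (INR n)) + ln (INR (S n))
    - / 2 * ln ((x + INR (S n)) ^ 2 + y ^ 2).
Proof.
unfold gauss_lnabs; rewrite tech5.
rewrite fact_simpl, mult_INR, ln_mult by (apply lt_0_INR; lia || apply lt_O_fact).
ring.
Qed.

Lemma gauss_arg_succ (x y : R) (n : nat) :
  gauss_arg x y (S n) - gauss_arg x y n
  = y * (ln (INR (S n)) - ln (INR n)) - atan (y / (x + INR (S n))).
Proof. unfold gauss_arg; rewrite tech5; ring. Qed.

(* With P = x + N + 1 the increment is x u - v - w/2 for u = ln ((N+1)/N), v = ln (P/(N+1))
   and w = ln (1 + y^2/P^2); the leading terms x/N of x u and of v cancel. *)
Lemma gauss_lnabs_increment_bound (x y N : R) : 0 < x -> 1 <= N ->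
  Rabs (x * (ln (N + 1) - ln N) + ln (N + 1) - / 2 * ln ((x + (N + 1)) ^ 2 + y ^ 2))
  <= (x * (x + 1) + y ^ 2) / N ^ 2.
Proof.
intros Hx HN.
set (P := x + (N + 1)).
assert (HP : N + 1 < P) by (unfold P; lra).
destruct (ln_sub_bounds N (N + 1)) as [Hu1 Hu2]; try lra.
destruct (ln_sub_bounds (N + 1) P) as [Hv1 Hv2]; try lra.
destruct (ln_sub_bounds (P ^ 2) (P ^ 2 + y ^ 2)) as [Hw1 Hw2]; try nra.
replace (N + 1 - N) with 1 in Hu1, Hu2 by ring.
replace (P - (N + 1)) with x in Hv1, Hv2 by (unfold P; ring).
replace (P ^ 2 + y ^ 2 - P ^ 2) with (y ^ 2) in Hw1, Hw2 by ring.
set (u := ln (N + 1) - ln N) in *.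
set (v := ln P - ln (N + 1)) in *.
set (w := ln (P ^ 2 + y ^ 2) - ln (P ^ 2)) in *.
assert (E : ln (P ^ 2) = 2 * ln P) by (rewrite ln_pow by lra; simpl; ring).
replace (x * u + ln (N + 1) - / 2 * ln (P ^ 2 + y ^ 2)) with (x * u - v - w / 2)
  by (unfold v, w; rewrite E; field).
assert (Hxu : x / (N + 1) <= x * u <= x / N).
{ split; [replace (x / (N + 1)) with (x * (1 / (N + 1))) by (field; lra)
         |replace (x / N) with (x * (1 / N)) by (field; lra)];
  apply Rmult_le_compat_l; lra. }
assert (Hw0 : 0 <= y ^ 2 / (P ^ 2 + y ^ 2)) by (apply Rdiv_le_0_compat; nra).
assert (Hup : x / N - x / P <= x * (x + 1) / N ^ 2).
{ replace (x / N - x / P) with (x * (x + 1) / (N * P)) by (unfold P; field; lra).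
  apply Rmult_le_compat_l; [nra|]. apply Rinv_le_contravar; nra. }
assert (Hlow : y ^ 2 / P ^ 2 <= y ^ 2 / N ^ 2).
{ apply Rmult_le_compat_l; [nra|]. apply Rinv_le_contravar; nra. }
assert (Hsplit : (x * (x + 1) + y ^ 2) / N ^ 2 = x * (x + 1) / N ^ 2 + y ^ 2 / N ^ 2)
  by (field; lra).
assert (0 <= x * (x + 1) / N ^ 2) by (apply Rdiv_le_0_compat; nra).
assert (0 <= y ^ 2 / N ^ 2) by (apply Rdiv_le_0_compat; nra).
apply Rabs_le; lra.
Qed.

Lemma gauss_arg_increment_bound (x y N : R) : 0 < x -> 1 <= N ->
  Rabs (y * (ln (N + 1) - ln N) - atan (y / (x + (N + 1))))
  <= (Rabs y * (x + 1) + Rabs y ^ 3) / N ^ 2.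
Proof.
intros Hx HN.
set (P := x + (N + 1)).
assert (HP : N + 1 < P) by (unfold P; lra).
destruct (ln_sub_bounds N (N + 1)) as [Hu1 Hu2]; try lra.
replace (N + 1 - N) with 1 in Hu1, Hu2 by ring.
set (u := ln (N + 1) - ln N) in *.
set (t := y / P).
replace (y * u - atan t) with (y * (u - / P) - (atan t - t)) by (unfold t; field; lra).
assert (Hu : 0 <= u - / P <= (x + 1) / N ^ 2).
{ split.
  - assert (/ P <= 1 / (N + 1)) by (unfold Rdiv; rewrite Rmult_1_l; apply Rinv_le_contravar; lra).
    lra.
  - unfold Rdiv in Hu2; rewrite Rmult_1_l in Hu2.
    assert (/ N - / P <= (x + 1) / N ^ 2); [|lra].
    replace (/ N - / P) with ((x + 1) / (N * P)) by (unfold P; field; lra).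
    apply Rmult_le_compat_l; [lra|]. apply Rinv_le_contravar; nra. }
assert (Ht : Rabs t <= Rabs y / N).
{ unfold t, Rdiv; rewrite Rabs_mult, Rabs_inv, (Rabs_pos_eq P) by lra.
  apply Rmult_le_compat_l; [apply Rabs_pos|]. apply Rinv_le_contravar; lra. }
assert (Ht3 : Rabs t ^ 3 <= Rabs y ^ 3 / N ^ 2).
{ pose proof (Rabs_pos t); pose proof (Rabs_pos y).
  apply Rle_trans with ((Rabs y / N) ^ 3); [apply pow_incr; lra|].
  replace ((Rabs y / N) ^ 3) with (Rabs y ^ 3 / N ^ 2 * / N) by (field; lra).
  rewrite <- (Rmult_1_r (Rabs y ^ 3 / N ^ 2)) at 2.
  apply Rmult_le_compat_l; [apply Rdiv_le_0_compat; [apply pow_le|]; nra|].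
  rewrite <- Rinv_1; apply Rinv_le_contravar; lra. }
eapply Rle_trans; [apply Rabs_triang|].
rewrite Rabs_Ropp, Rabs_mult, (Rabs_pos_eq (u - / P)) by lra.
pose proof (atan_sub_id_bound t).
assert (Rabs y * (u - / P) <= Rabs y * ((x + 1) / N ^ 2))
  by (apply Rmult_le_compat_l; [apply Rabs_pos|lra]).
replace ((Rabs y * (x + 1) + Rabs y ^ 3) / N ^ 2)
  with (Rabs y * ((x + 1) / N ^ 2) + Rabs y ^ 3 / N ^ 2) by (field; lra).
lra.
Qed.

(* The increment bounds need N >= 1, hence the shift by one (the n = 0 term also involves
   the junk value ln 0). *)
Lemma is_lim_seq_gauss_lnabs (x y : R) : 0 < x -> is_lim_seq (gauss_lnabs x y) (lnabsGamma x y).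
Proof.
intros Hx; apply is_lim_seq_incr_1; unfold lnabsGamma; rewrite <- Lim_seq_incr_1.
apply (is_lim_seq_of_summable_increments (fun n => gauss_lnabs x y (S n)) (x * (x + 1) + y ^ 2)).
intros k.
rewrite gauss_lnabs_succ, !S_INR.
apply gauss_lnabs_increment_bound; [exact Hx|pose proof (pos_INR k); lra].
Qed.

Lemma is_lim_seq_gauss_arg (x y : R) : 0 < x -> is_lim_seq (gauss_arg x y) (argGamma x y).
Proof.
intros Hx; apply is_lim_seq_incr_1; unfold argGamma; rewrite <- Lim_seq_incr_1.
apply (is_lim_seq_of_summable_increments (fun n => gauss_arg x y (S n))
         (Rabs y * (x + 1) + Rabs y ^ 3)).
intros k.
rewrite gauss_arg_succ, !S_INR.
apply gauss_arg_increment_bound; [exact Hx|pose proof (pos_INR k); lra].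
Qed.

Lemma lnabsGamma_opp (x y : R) : lnabsGamma x (- y) = lnabsGamma x y.
Proof.
unfold lnabsGamma, gauss_lnabs; f_equal; apply Lim_seq_ext; intros n.
do 2 f_equal; apply sum_eq; intros j _; f_equal; ring.
Qed.

Lemma argGamma_opp (x y : R) : argGamma x (- y) = - argGamma x y.
Proof.
unfold argGamma.
rewrite (Lim_seq_ext _ (fun n => - gauss_arg x y n)), Lim_seq_opp.
- destruct (Lim_seq (gauss_arg x y)); simpl; ring.
- intros n; unfold gauss_arg.
  rewrite (sum_eq _ (fun j => atan (y / (x + INR j)) * -1)), <- scal_sum.
  + ring.
  + intros j _; unfold Rdiv; rewrite Ropp_mult_distr_l_reverse, atan_opp; ring.
Qed.

Lemma argGamma_0 (x : R) : argGamma x 0 = 0.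
Proof.
unfold argGamma, gauss_arg.
rewrite (Lim_seq_ext _ (fun _ => 0)), Lim_seq_const; [reflexivity|].
intros n; rewrite (sum_eq _ (fun _ => 0)), sum_cte; [ring|].
intros j _; unfold Rdiv; rewrite Rmult_0_l, atan_0; reflexivity.
Qed.

Definition polar (r theta : R) : C := (r * cos theta, r * sin theta).

Lemma polar_mult (r s r' t : R) : Cmult (polar r s) (polar r' t) = polar (r * r') (s + t).
Proof. unfold polar, Cmult; simpl; rewrite cos_plus, sin_plus; f_equal; ring. Qed.

Lemma polar_div (r s r' t : R) : r' <> 0 -> Cdiv (polar r s) (polar r' t) = polar (r / r') (s - t).
Proof.
intros Hr'; unfold polar, Cdiv, Cinv, Cmult; cbn [fst snd]; rewrite cos_minus, sin_minus.
replace ((r' * cos t) ^ 2 + (r' * sin t) ^ 2) with (r' * r') by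
  (pose proof (sin2_cos2 t) as H; unfold Rsqr in H; nra).
f_equal; field; exact Hr'.
Qed.

Lemma polar_0 (r : R) : polar r 0 = RtoC r.
Proof. unfold polar, RtoC; rewrite cos_0, sin_0; f_equal; ring. Qed.

Lemma pair_polar (x y : R) : 0 < x ->
  ((x, y) : C) = polar (exp (/ 2 * ln (x ^ 2 + y ^ 2))) (atan (y / x)).
Proof.
intros Hx; unfold polar.
set (s := exp (/ 2 * ln (x ^ 2 + y ^ 2))).
assert (Hs : 0 < s) by apply exp_pos.
assert (Hs2 : s * s = x ^ 2 + y ^ 2).
{ unfold s; rewrite <- exp_plus, <- Rmult_plus_distr_r.
  replace (/ 2 + / 2) with 1 by field; rewrite Rmult_1_l; apply exp_ln; nra. }
assert (Hsqrt : sqrt (1 + (y / x)²) = s / x).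
{ apply sqrt_lem_1; [pose proof (Rle_0_sqr (y / x)); lra|apply Rdiv_le_0_compat; lra|].
  unfold Rsqr; replace (s / x * (s / x)) with (s * s / (x * x)) by (field; lra).
  rewrite Hs2; field; lra. }
rewrite cos_atan, sin_atan, Hsqrt; f_equal; field; lra.
Qed.

Lemma poch_prod_polar (x y : R) (n : nat) : 0 < x ->
  poch_prod (x, y) n
  = polar (exp (/ 2 * sum_f_R0 (fun j => ln ((x + INR j) ^ 2 + y ^ 2)) n))
          (sum_f_R0 (fun j => atan (y / (x + INR j))) n).
Proof.
intros Hx; induction n as [|n IH].
- simpl; rewrite Rplus_0_r; apply pair_polar, Hx.
- cbn [poch_prod]; rewrite IH, !tech5.
  replace (Cplus (x, y) (RtoC (INR (S n)))) with ((x + INR (S n), y) : C)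
    by (unfold Cplus, RtoC; simpl; f_equal; ring).
  rewrite pair_polar, polar_mult, <- exp_plus, Rmult_plus_distr_l
    by (pose proof (pos_INR (S n)); lra).
  reflexivity.
Qed.

Lemma Gamma_seq_polar (x y : R) (n : nat) : 0 < x ->
  Gamma_seq (x, y) n = polar (exp (gauss_lnabs x y n)) (gauss_arg x y n).
Proof.
intros Hx; unfold Gamma_seq.
change (cpow_nat n (x, y)) with (polar (exp (x * ln (INR n))) (y * ln (INR n))).
rewrite <- polar_0, poch_prod_polar, polar_mult, polar_div
  by (exact Hx || apply Rgt_not_eq, exp_pos).
unfold gauss_lnabs, gauss_arg; f_equal.
- unfold Rminus; rewrite !exp_plus, exp_Ropp, exp_ln by apply INR_fact_lt_0; reflexivity.
- ring.
Qed.

Lemma CGamma_polar (x y : R) : 0 < x -> CGamma (x, y) = polar (exp (lnabsGamma x y)) (argGamma x y).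
Proof.
intros Hx.
assert (Hr : is_lim_seq (fun n => exp (gauss_lnabs x y n)) (exp (lnabsGamma x y))).
{ apply is_lim_seq_continuous; [apply derivable_continuous_pt, derivable_pt_exp|].
  apply is_lim_seq_gauss_lnabs, Hx. }
assert (Harg := is_lim_seq_gauss_arg x y Hx).
assert (Hcos := is_lim_seq_continuous cos _ _ (continuity_cos _) Harg).
assert (Hsin := is_lim_seq_continuous sin _ _ (continuity_sin _) Harg).
unfold CGamma, polar; f_equal.
- rewrite (Lim_seq_ext _ (fun n => exp (gauss_lnabs x y n) * cos (gauss_arg x y n)))
    by (intros n; rewrite Gamma_seq_polar by exact Hx; reflexivity).
  now rewrite (is_lim_seq_unique _ _ (is_lim_seq_mult' _ _ _ _ Hr Hcos)).
- rewrite (Lim_seq_ext _ (fun n => exp (gauss_lnabs x y n) * sin (gauss_arg x y n)))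
    by (intros n; rewrite Gamma_seq_polar by exact Hx; reflexivity).
  now rewrite (is_lim_seq_unique _ _ (is_lim_seq_mult' _ _ _ _ Hr Hsin)).
Qed.

(** * Theta on the imaginary and on the real axis *)

Definition lnGamma_ratio (g x y : R) : R := lnabsGamma (x + g) y - lnabsGamma x y.

Definition argGamma_ratio (g x y : R) : R := argGamma (x + g) y - argGamma x y.

Lemma CGamma_ratio_polar (g x y : R) : 0 < g -> 0 < x ->
  Cdiv (CGamma (x + g, y)) (CGamma (x, y))
  = polar (exp (lnGamma_ratio g x y)) (argGamma_ratio g x y).
Proof.
intros Hg Hx; rewrite !CGamma_polar, polar_div by (lra || apply Rgt_not_eq, exp_pos).
unfold lnGamma_ratio, Rminus; rewrite exp_plus, exp_Ropp; reflexivity.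
Qed.

Lemma Theta_arg_plus (s a b1 b2 : R) :
  Cplus (RtoC s) (Cdiv (Cplus (RtoC a) (Cmult Ci (b1, b2))) (RtoC 2))
  = ((s + (a - b2) / 2, b1 / 2) : C).
Proof. unfold Cplus, Cdiv, Cmult, Cinv, RtoC, Ci; cbn [fst snd]; f_equal; field. Qed.

Lemma Theta_arg_minus (s a b1 b2 : R) :
  Cplus (RtoC s) (Cdiv (Cminus (RtoC a) (Cmult Ci (b1, b2))) (RtoC 2))
  = ((s + (a + b2) / 2, - (b1 / 2)) : C).
Proof. unfold Cminus, Cplus, Copp, Cdiv, Cmult, Cinv, RtoC, Ci; cbn [fst snd]; f_equal; field. Qed.

Lemma Theta_polar (g a b1 b2 x1 x2 : R) : 0 < g ->
  x1 = (1 - g) / 2 + (a - b2) / 2 -> x2 = (1 - g) / 2 + (a + b2) / 2 -> 0 < x1 -> 0 < x2 ->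
  Theta g a (b1, b2)
  = polar (Rpower 4 g * (exp (lnGamma_ratio g x1 (b1 / 2)) * exp (lnGamma_ratio g x2 (- (b1 / 2)))))
          (0 + (argGamma_ratio g x1 (b1 / 2) + argGamma_ratio g x2 (- (b1 / 2)))).
Proof.
intros Hg Hx1 Hx2 Hx1pos Hx2pos; unfold Theta.
rewrite !Theta_arg_plus, !Theta_arg_minus.
replace ((1 + g) / 2 + (a - b2) / 2) with (x1 + g) by (rewrite Hx1; field).
replace ((1 + g) / 2 + (a + b2) / 2) with (x2 + g) by (rewrite Hx2; field).
rewrite <- Hx1, <- Hx2, !CGamma_ratio_polar, <- polar_0, !polar_mult by assumption.
reflexivity.
Qed.

Lemma Theta_imaginary (g a beta : R) : 0 < g ->
  0 < (1 - g) / 2 + (a - beta) / 2 -> 0 < (1 - g) / 2 + (a + beta) / 2 ->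
  Theta g a (0, beta)
  = RtoC (Rpower 4 g * exp (lnGamma_ratio g ((1 - g) / 2 + (a - beta) / 2) 0
                            + lnGamma_ratio g ((1 - g) / 2 + (a + beta) / 2) 0)).
Proof.
intros Hg H1 H2.
rewrite (Theta_polar g a 0 beta _ _ Hg eq_refl eq_refl H1 H2).
unfold argGamma_ratio; rewrite Rdiv_0_l, Ropp_0, !argGamma_0, exp_plus, <- polar_0.
f_equal; ring.
Qed.

Lemma Theta_real (g a y : R) : 0 < g -> 0 < (1 - g) / 2 + a / 2 ->
  Theta g a (RtoC y) = RtoC (Rpower 4 g * exp (2 * lnGamma_ratio g ((1 - g) / 2 + a / 2) (y / 2))).
Proof.
intros Hg H.
set (x := (1 - g) / 2 + a / 2).
assert (Hx : x = (1 - g) / 2 + (a - 0) / 2) by (unfold x; f_equal; field).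
assert (Hx' : x = (1 - g) / 2 + (a + 0) / 2) by (unfold x; f_equal; field).
change (Theta g a (RtoC y)) with (Theta g a (y, 0)).
rewrite (Theta_polar g a y 0 x x Hg Hx Hx' H H).
unfold lnGamma_ratio, argGamma_ratio.
rewrite !argGamma_opp, !lnabsGamma_opp, <- exp_plus, <- polar_0.
f_equal; [do 2 f_equal|]; ring.
Qed.

(** * Derivatives of the log-modulus ratio *)

Lemma is_derive_gauss_lnabs_x (x : R) (n : nat) : 0 < x ->
  is_derive (fun t => gauss_lnabs t 0 n) x (ln (INR n) - sum_f_R0 (fun j => / (x + INR j)) n).
Proof.
intros Hx; unfold gauss_lnabs.
replace (sum_f_R0 (fun j => / (x + INR j)) n) with (/ 2 * sum_f_R0 (fun j => 2 / (x + INR j)) n)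
  by (rewrite scal_sum; apply sum_eq; intros j _; pose proof (pos_INR j); field; lra).
apply (is_derive_minus (fun t => t * ln (INR n) + ln (INR (fact n)))).
- auto_derive; [exact I|ring].
- apply is_derive_scal, (is_derive_sum_f_R0 (fun j t => ln ((t + INR j) ^ 2 + 0 ^ 2))).
  intros j _; pose proof (pos_INR j); auto_derive; [nra|field; lra].
Qed.

Lemma is_derive_gauss_lnabs_y (x y : R) (n : nat) : 0 < x ->
  is_derive (fun t => gauss_lnabs x t n) y (- sum_f_R0 (fun j => y / ((x + INR j) ^ 2 + y ^ 2)) n).
Proof.
intros Hx; unfold gauss_lnabs.
replace (- sum_f_R0 (fun j => y / ((x + INR j) ^ 2 + y ^ 2)) n)
  with (0 - / 2 * sum_f_R0 (fun j => 2 * y / ((x + INR j) ^ 2 + y ^ 2)) n)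
  by (rewrite scal_sum; unfold Rminus; rewrite Rplus_0_l; f_equal; apply sum_eq; intros j _;
      pose proof (pos_INR j); field; nra).
apply (is_derive_minus (fun _ => x * ln (INR n) + ln (INR (fact n)))).
- auto_derive; [exact I|ring].
- apply is_derive_scal, (is_derive_sum_f_R0 (fun j t => ln ((x + INR j) ^ 2 + t ^ 2))).
  intros j _; pose proof (pos_INR j); auto_derive; [nra|field; nra].
Qed.

Section LnGammaRatio.

Variable g : R.

Hypothesis g_pos : 0 < g.

Definition digamma_gap (x : R) : R :=
  Series (fun j => / (x + INR j) - / (x + g + INR j)).

Definition lnGamma_ratio_dy (x y : R) : R :=
  Series (fun j => y / ((x + INR j) ^ 2 + y ^ 2) - y / ((x + g + INR j) ^ 2 + y ^ 2)).

Lemma digamma_gap_term_pos (x : R) (j : nat) : 0 < x -> 0 < / (x + INR j) - / (x + g + INR j).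
Proof.
intros Hx; replace (x + g + INR j) with (x + INR j + g) by ring.
pose proof (pos_INR j); apply inv_sub_inv_pos; lra.
Qed.

Lemma digamma_gap_term_bound (x : R) (j : nat) : 0 < x ->
  Rabs (/ (x + INR (S j)) - / (x + g + INR (S j))) <= g / (INR j + 1) ^ 2.
Proof.
intros Hx; rewrite S_INR.
replace (x + g + (INR j + 1)) with (x + (INR j + 1) + g) by ring.
pose proof (pos_INR j).
rewrite Rabs_pos_eq by (apply Rlt_le, inv_sub_inv_pos; lra).
apply inv_sub_inv_bound; lra.
Qed.

Lemma lnGamma_ratio_dy_term_bound (x y Y : R) (j : nat) : 0 < x -> Rabs y <= Y ->
  Rabs (y / ((x + INR (S j)) ^ 2 + y ^ 2) - y / ((x + g + INR (S j)) ^ 2 + y ^ 2))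
  <= 2 * Y * g / (INR j + 1) ^ 2.
Proof.
intros Hx HY; rewrite S_INR.
replace (x + g + (INR j + 1)) with (x + (INR j + 1) + g) by ring.
apply ratio_sub_ratio_bound; [exact g_pos|pose proof (pos_INR j); lra|exact HY].
Qed.

Lemma ex_series_digamma_gap (x : R) : 0 < x ->
  ex_series (fun j => / (x + INR j) - / (x + g + INR j)).
Proof.
intros Hx; exact (proj1 (Series_tail_bound _ _ (fun j => digamma_gap_term_bound x j Hx))).
Qed.

Lemma ex_series_lnGamma_ratio_dy (x y : R) : 0 < x ->
  ex_series (fun j => y / ((x + INR j) ^ 2 + y ^ 2) - y / ((x + g + INR j) ^ 2 + y ^ 2)).
Proof.
intros Hx.
exact (proj1 (Series_tail_bound _ _
  (fun j => lnGamma_ratio_dy_term_bound x y (Rabs y) j Hx (Rle_refl _)))).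
Qed.

Lemma digamma_gap_pos (x : R) : 0 < x -> 0 < digamma_gap x.
Proof.
intros Hx; apply (Series_pos _ (ex_series_digamma_gap x Hx)).
- intros j; apply Rlt_le, digamma_gap_term_pos, Hx.
- apply digamma_gap_term_pos, Hx.
Qed.

Lemma digamma_gap_decreasing (x1 x2 : R) : 0 < x1 -> x1 < x2 -> digamma_gap x2 < digamma_gap x1.
Proof.
intros Hx1 Hx12.
assert (Hterm : forall j,
  / (x2 + INR j) - / (x2 + g + INR j) < / (x1 + INR j) - / (x1 + g + INR j)).
{ intros j; replace (x1 + g + INR j) with (x1 + INR j + g) by ring.
  replace (x2 + g + INR j) with (x2 + INR j + g) by ring.
  pose proof (pos_INR j); apply inv_sub_inv_decreasing; lra. }
apply Series_lt; [apply ex_series_digamma_gap; lra|apply ex_series_digamma_gap, Hx1| |].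
- intros j; apply Rlt_le, Hterm.
- apply Hterm.
Qed.

Lemma lnGamma_ratio_dy_pos (x y : R) : 0 < x -> 0 < y -> 0 < lnGamma_ratio_dy x y.
Proof.
intros Hx Hy.
assert (Hterm : forall j, 0 < y / ((x + INR j) ^ 2 + y ^ 2) - y / ((x + g + INR j) ^ 2 + y ^ 2)).
{ intros j; replace (x + g + INR j) with (x + INR j + g) by ring.
  pose proof (pos_INR j); apply ratio_sub_ratio_pos; lra. }
apply (Series_pos _ (ex_series_lnGamma_ratio_dy x y Hx)); [intros j; apply Rlt_le|]; apply Hterm.
Qed.

Lemma is_derive_lnGamma_ratio_x (x : R) : 0 < x ->
  is_derive (fun t => lnGamma_ratio g t 0) x (digamma_gap x).
Proof.
intros Hx.
assert (Hr : 0 < x / 2) by lra.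
assert (Hball : forall y, Rabs (y - x) < mkposreal _ Hr -> 0 < y)
  by (intros y Hy; simpl in Hy; apply Rabs_def2 in Hy; lra).
apply (is_derive_lim_termwise (fun n t => gauss_lnabs (t + g) 0 n - gauss_lnabs t 0 n) _
         (fun j t => / (t + INR j) - / (t + g + INR j)) x (mkposreal _ Hr) g).
- intros n y Hy; apply Hball in Hy.
  assert (Hshift := is_derive_comp (fun t => gauss_lnabs t 0 n) (fun t => t + g) y _ 1
    (is_derive_gauss_lnabs_x (y + g) n ltac:(lra)) ltac:(auto_derive; [exact I|ring])).
  rewrite Rmult_1_l in Hshift.
  rewrite minus_sum.
  replace (sum_f_R0 (fun j => / (y + INR j)) n - sum_f_R0 (fun j => / (y + g + INR j)) n)
    with ((ln (INR n) - sum_f_R0 (fun j => / (y + g + INR j)) n)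
          - (ln (INR n) - sum_f_R0 (fun j => / (y + INR j)) n)) by ring.
  apply (is_derive_minus _ _ _ _ _ Hshift), is_derive_gauss_lnabs_x, Hy.
- intros y Hy; apply Hball in Hy.
  apply is_lim_seq_minus'; apply is_lim_seq_gauss_lnabs; lra.
- intros j y Hy; apply Hball in Hy; pose proof (pos_INR j).
  apply (@ex_derive_continuous R_AbsRing R_NormedModule); auto_derive; repeat split; lra.
- intros j y Hy; apply digamma_gap_term_bound, (Hball y Hy).
Qed.

Lemma is_derive_lnGamma_ratio_y (x y : R) : 0 < x ->
  is_derive (fun t => lnGamma_ratio g x t) y (lnGamma_ratio_dy x y).
Proof.
intros Hx.
assert (Hball : forall z, Rabs (z - y) < mkposreal 1 Rlt_0_1 -> Rabs z <= Rabs y + 1).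
{ intros z Hz; simpl in Hz.
  replace z with ((z - y) + y) by ring; pose proof (Rabs_triang (z - y) y); lra. }
apply (is_derive_lim_termwise (fun n t => gauss_lnabs (x + g) t n - gauss_lnabs x t n) _
         (fun j t => t / ((x + INR j) ^ 2 + t ^ 2) - t / ((x + g + INR j) ^ 2 + t ^ 2))
         y (mkposreal 1 Rlt_0_1) (2 * (Rabs y + 1) * g)).
- intros n z _; rewrite minus_sum.
  replace (sum_f_R0 (fun j => z / ((x + INR j) ^ 2 + z ^ 2)) n
           - sum_f_R0 (fun j => z / ((x + g + INR j) ^ 2 + z ^ 2)) n)
    with (- sum_f_R0 (fun j => z / ((x + g + INR j) ^ 2 + z ^ 2)) n
          - - sum_f_R0 (fun j => z / ((x + INR j) ^ 2 + z ^ 2)) n) by ring.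
  apply (is_derive_minus (fun t => gauss_lnabs (x + g) t n) (fun t => gauss_lnabs x t n));
    apply is_derive_gauss_lnabs_y; lra.
- intros z _; apply is_lim_seq_minus'; apply is_lim_seq_gauss_lnabs; lra.
- intros j z _; pose proof (pos_INR j).
  apply (@ex_derive_continuous R_AbsRing R_NormedModule); auto_derive; split; nra.
- intros j z Hz; apply lnGamma_ratio_dy_term_bound; [exact Hx|exact (Hball z Hz)].
Qed.

End LnGammaRatio.

(** * Derivatives of Theta *)

Lemma Rpower_pos (x y : R) : 0 < Rpower x y.
Proof. apply exp_pos. Qed.

Lemma scal_RtoC_1 (k : R) :
  (scal k (RtoC 1) : prod_NormedModule R_AbsRing R_NormedModule R_NormedModule) = RtoC k.
Proof. unfold RtoC; apply injective_projections; [apply Rmult_1_r|apply Rmult_0_r]. Qed.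

Lemma is_derive_RtoC_scaled_exp (T : R -> C) (h : R -> R) (x r dh : R) :
  locally x (fun t => RtoC (r * exp (h t)) = T t) -> is_derive h x dh ->
  is_derive T x (RtoC (r * exp (h x) * dh)).
Proof.
intros Hloc Hh; apply (is_derive_ext_loc _ _ _ _ Hloc).
assert (Hexp := is_derive_scal _ _ r _ (is_derive_comp exp h x _ _ (is_derive_exp (h x)) Hh)).
apply (is_derive_ext (fun t => scal (r * exp (h t)) (RtoC 1))); [intros t; apply scal_RtoC_1|].
rewrite <- (scal_RtoC_1 (r * exp (h x) * dh)).
apply (@is_derive_scal_l R_AbsRing (prod_NormedModule R_AbsRing R_NormedModule R_NormedModule)).
replace (r * exp (h x) * dh) with (r * (dh * exp (h x))) by ring; exact Hexp.
Qed.

Lemma is_derive_lnGamma_ratio_comp (g : R) (u : R -> R) (t du : R) :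
  0 < g -> 0 < u t -> is_derive u t du ->
  is_derive (fun s => lnGamma_ratio g (u s) 0) t (du * digamma_gap g (u t)).
Proof.
intros Hg Hu Hdu; apply (is_derive_comp (fun v => lnGamma_ratio g v 0)); [|exact Hdu].
apply is_derive_lnGamma_ratio_x; assumption.
Qed.

Lemma Theta_imaginary_derive_a (g a beta : R) :
  0 < g -> 0 <= beta -> 0 < (1 - g) / 2 + (a - beta) / 2 ->
  exists d : C, is_derive (fun x => Theta g x (0, beta)) a d /\ Im d = 0 /\ 0 < Re d.
Proof.
intros Hg Hbeta Hx1.
set (h := fun t => lnGamma_ratio g ((1 - g) / 2 + (t - beta) / 2) 0
                   + lnGamma_ratio g ((1 - g) / 2 + (t + beta) / 2) 0).
set (x1 := (1 - g) / 2 + (a - beta) / 2) in *.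
set (x2 := (1 - g) / 2 + (a + beta) / 2).
set (dh := / 2 * digamma_gap g x1 + / 2 * digamma_gap g x2).
assert (Hh : is_derive h a dh).
{ apply (is_derive_plus (fun t => lnGamma_ratio g ((1 - g) / 2 + (t - beta) / 2) 0));
    (apply is_derive_lnGamma_ratio_comp;
     [exact Hg|unfold x1, x2 in *; lra|auto_derive; [exact I|field]]). }
exists (RtoC (Rpower 4 g * exp (h a) * dh)); split; [|split; [reflexivity|]].
- apply is_derive_RtoC_scaled_exp; [|exact Hh].
  exists (mkposreal x1 Hx1); intros t Ht.
  change (Rabs (t - a) < x1) in Ht; apply Rabs_def2 in Ht.
  symmetry; apply Theta_imaginary; [exact Hg| |]; unfold x1 in *; lra.
- pose proof (digamma_gap_pos g Hg x1 Hx1).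
  pose proof (digamma_gap_pos g Hg x2 ltac:(unfold x1, x2 in *; lra)).
  apply Rmult_lt_0_compat; [apply Rmult_lt_0_compat; [apply Rpower_pos|apply exp_pos]|].
  unfold dh; lra.
Qed.

Lemma Theta_imaginary_derive_beta (g a beta : R) :
  0 < g -> 0 < beta -> 0 < (1 - g) / 2 + (a - beta) / 2 ->
  exists d : C, is_derive (fun y => Theta g a (0, y)) beta d /\ Im d = 0 /\ Re d < 0.
Proof.
intros Hg Hbeta Hx1.
set (h := fun t => lnGamma_ratio g ((1 - g) / 2 + (a - t) / 2) 0
                   + lnGamma_ratio g ((1 - g) / 2 + (a + t) / 2) 0).
set (x1 := (1 - g) / 2 + (a - beta) / 2) in *.
set (x2 := (1 - g) / 2 + (a + beta) / 2).
set (dh := - / 2 * digamma_gap g x1 + / 2 * digamma_gap g x2).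
assert (Hh : is_derive h beta dh).
{ apply (is_derive_plus (fun t => lnGamma_ratio g ((1 - g) / 2 + (a - t) / 2) 0));
    (apply is_derive_lnGamma_ratio_comp;
     [exact Hg|unfold x1, x2 in *; lra|auto_derive; [exact I|field]]). }
exists (RtoC (Rpower 4 g * exp (h beta) * dh)); split; [|split; [reflexivity|]].
- apply is_derive_RtoC_scaled_exp; [|exact Hh].
  exists (mkposreal x1 Hx1); intros t Ht.
  change (Rabs (t - beta) < x1) in Ht; apply Rabs_def2 in Ht.
  symmetry; apply Theta_imaginary; [exact Hg| |]; unfold x1 in *; lra.
- assert (Hdh : dh < 0).
  { pose proof (digamma_gap_decreasing g Hg x1 x2 Hx1 ltac:(unfold x1, x2; lra)); unfold dh; lra. }
  simpl; rewrite <- (Rmult_0_r (Rpower 4 g * exp (h beta))).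
  apply Rmult_lt_compat_l; [apply Rmult_lt_0_compat; [apply Rpower_pos|apply exp_pos]|exact Hdh].
Qed.

Lemma Theta_real_derive_b (g a b : R) :
  0 < g -> 0 < (1 - g) / 2 + a / 2 -> 0 < b ->
  exists d : C, is_derive (fun y => Theta g a (RtoC y)) b d /\ Im d = 0 /\ 0 < Re d.
Proof.
intros Hg Hx Hb.
set (x := (1 - g) / 2 + a / 2) in *.
set (h := fun t => 2 * lnGamma_ratio g x (t / 2)).
set (dh := 2 * (/ 2 * lnGamma_ratio_dy g x (b / 2))).
assert (Hh : is_derive h b dh).
{ apply is_derive_scal, (is_derive_comp (fun u => lnGamma_ratio g x u)).
  - apply is_derive_lnGamma_ratio_y; assumption.
  - auto_derive; [exact I|field]. }
exists (RtoC (Rpower 4 g * exp (h b) * dh)); split; [|split; [reflexivity|]].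
- apply is_derive_RtoC_scaled_exp; [|exact Hh].
  apply filter_forall; intros t; symmetry; apply Theta_real; assumption.
- pose proof (lnGamma_ratio_dy_pos g Hg x (b / 2) Hx ltac:(lra)).
  apply Rmult_lt_0_compat; [apply Rmult_lt_0_compat; [apply Rpower_pos|apply exp_pos]|].
  unfold dh; lra.
Qed.

Theorem lemma3p7 (n k : nat) (gam : R) :
  0 < gam -> gam < INR n / 2 ->
  (1 <= k)%nat -> INR k < INR n / 2 - gam ->
  let a0 := (INR n - INR k - 2) / 2 in
  (* (i) *)
  (forall a beta, a0 <= a -> 0 < beta -> beta <= INR k / 2 ->
     exists d : C, is_derive (fun x : R => Theta gam x (0, beta)) a d
                   /\ Im d = 0 /\ 0 < Re d) /\
  (* (ii) *)
  (forall a beta, a0 <= a -> 0 < beta -> beta <= INR k / 2 ->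
     exists d : C, is_derive (fun y : R => Theta gam a (0, y)) beta d
                   /\ Im d = 0 /\ Re d < 0) /\
  (* (iii) *)
  (forall a b, a0 <= a -> 0 < b ->
     exists d : C, is_derive (fun y : R => Theta gam a (RtoC y)) b d
                   /\ Im d = 0 /\ 0 < Re d).
Proof.
intros Hgam _ _ Hkn a0.
pose proof (pos_INR k).
assert (Hpos : forall a beta, a0 <= a -> beta <= INR k / 2 -> 0 < (1 - gam) / 2 + (a - beta) / 2)
  by (intros a beta Ha Hbeta; unfold a0 in Ha; lra).
split; [|split].
- intros a beta Ha Hbeta Hbeta'.
  apply Theta_imaginary_derive_a; [exact Hgam|lra|exact (Hpos a beta Ha Hbeta')].
- intros a beta Ha Hbeta Hbeta'.
  apply Theta_imaginary_derive_beta; [exact Hgam|exact Hbeta|exact (Hpos a beta Ha Hbeta')].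
- intros a b Ha Hb.
  apply Theta_real_derive_b; [exact Hgam| |exact Hb].
  pose proof (Hpos a 0 Ha ltac:(lra)); lra.
Qed.
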